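(* Consider the networked $SIRS$-$V_o$ system without media actuator described in the context, with initial condition at time $t_0$ satisfying $o_i(t_0),s_i(t_0),x_i(t_0),r_i(t_0),v_i(t_0)\in[0,1]$ and $s_i(t_0)+x_i(t_0)+r_i(t_0)+v_i(t_0)=1$ for all $i$. If $o(t_0)\in[0,1]^n$, then $o_i(t)\in[0,1]$ for all $i\in[n]$ and all $t>t_0$.
   Context: There are $n$ nodes. All parameters are real and nonnegative: $a_{ij},\beta_{ij},\gamma_i,\omega_i,\delta_i,\eta^{\min}_{ij},\Delta\eta_{ij}$. Let $A=[a_{ij}]$, $B=[\beta_{ij}]$, $H_{\min}=[\eta^{\min}_{ij}]$, $\Delta H=[\Delta\eta_{ij}]$. For a square matrix $M$, $k_i[M]=\sum_j M_{ij}$, $\widetilde K[M]=\mathrm{diag}(k_i[M])$, $L[M]=\widetilde K[M]-M$. Let $\widetilde G=\mathrm{diag}(\gamma_i)$, $\widetilde W=\mathrm{diag}(\omega_i)$, $\widetilde D=\mathrm{diag}(\delta_i)$, $H(o)=\mathrm{diag}(o)\Delta H+H_{\min}$. State $(o,s,x,r,v)\in(\mathbb{R}^n)^5$, $\widetilde S=\mathrm{diag}(s)$, $\widetilde R=\mathrm{diag}(r)$, dynamics $\dot o=A(x-o)-2L[A]o$, $\dot s=\widetilde Dv-\widetilde S(Bx+H(o)v)+\widetilde Wr$, $\dot x=\widetilde SBx-\widetilde Gx$, $\dot r=\widetilde Gx-\widetilde Wr-\widetilde RH(o)v$, $\dot v=(\widetilde S+\widetilde R)H(o)v-\widetilde Dv$.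 *)

From HB Require Import structures.
From mathcomp Require Import all_boot all_order all_algebra.
From mathcomp Require Import all_classical all_reals all_analysis.
Set Implicit Arguments. Unset Strict Implicit. Unset Printing Implicit Defensive.
Import Order.TTheory GRing.Theory Num.Theory.
Import numFieldNormedType.Exports.
Local Open Scope ring_scope.

Definition kvec (R : realType) (n : nat) (M : 'M[R]_n) : 'cV[R]_n :=
  \col_i (\sum_j M i j).

Definition diagc (R : realType) (n : nat) (v : 'cV[R]_n) : 'M[R]_n :=
  diag_mx v^T.

Definition Ktil (R : realType) (n : nat) (M : 'M[R]_n) : 'M[R]_n :=
  diagc (kvec M).

Definition Lap (R : realType) (n : nat) (M : 'M[R]_n) : 'M[R]_n :=
  Ktil M - M.

Definition Hof (R : realType) (n : nat) (dH Hmin : 'M[R]_n) (o : 'cV[R]_n)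
  : 'M[R]_n := diagc o *m dH + Hmin.

Definition rhs_o (R : realType) (n : nat) (A : 'M[R]_n) (o x : 'cV[R]_n)
  : 'cV[R]_n := A *m (x - o) - 2%:R *: (Lap A *m o).

Definition rhs_s (R : realType) (n : nat) (B dH Hmin : 'M[R]_n)
  (omega delta : 'cV[R]_n) (o s x r v : 'cV[R]_n) : 'cV[R]_n :=
  diagc delta *m v - diagc s *m (B *m x + Hof dH Hmin o *m v)
  + diagc omega *m r.

Definition rhs_x (R : realType) (n : nat) (B : 'M[R]_n)
  (gamma : 'cV[R]_n) (s x : 'cV[R]_n) : 'cV[R]_n :=
  diagc s *m B *m x - diagc gamma *m x.

Definition rhs_r (R : realType) (n : nat) (dH Hmin : 'M[R]_n)
  (gamma omega : 'cV[R]_n) (o x r v : 'cV[R]_n) : 'cV[R]_n :=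
  diagc gamma *m x - diagc omega *m r - diagc r *m Hof dH Hmin o *m v.

Definition rhs_v (R : realType) (n : nat) (dH Hmin : 'M[R]_n)
  (delta : 'cV[R]_n) (o s r v : 'cV[R]_n) : 'cV[R]_n :=
  (diagc s + diagc r) *m Hof dH Hmin o *m v - diagc delta *m v.

Local Open Scope classical_set_scope.
Definition cont_from (R : realType) (t0 : R) (f : R -> R) : Prop :=
  {within `[t0, +oo[, continuous f}.

(* Follow, at every node, the six quantities o, 1 - o, s, x, r and v.
   Summing the last four equations shows that s + x + r + v stays equal to 1.
   The vector field is quasi-positive for these quantities: whenever all of
   them are >= -g (with 0 < g <= 1) and one of them equals -g, its derivative
   is >= -C g, where C depends only on the parameters.  A barrier argument
   with the perturbation eps exp((C + 1)(t - t1)) then shows that none of the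
   six quantities becomes negative, so 0 <= o <= 1. *)

From HB Require Import structures.
From mathcomp Require Import all_boot all_order all_algebra.
From mathcomp Require Import all_classical all_reals all_analysis.
From mathcomp Require Import ring lra.
Set Implicit Arguments. Unset Strict Implicit. Unset Printing Implicit Defensive.
Import Order.TTheory GRing.Theory Num.Theory.
Import numFieldNormedType.Exports.
Local Open Scope ring_scope.
Local Open Scope classical_set_scope.

Section RealLemmas.
Variable R : realType.

Lemma is_derive_le0_left_min (f : R -> R) (t d : R) :
  is_derive t 1 f d -> (\forall u \near t^'-, f t <= f u) -> d <= 0.
Proof.
move=> [df <-] fmin; rewrite ['D_1 f t]cvg_at_leftE //; apply: limr_le.
  rewrite -(cvg_at_leftE (fun h : R => h^-1 *: ((f \o shift t) (h *: 1) - f t))) //.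
  apply: cvg_trans df; apply: cvg_app => A [e e0 Ae].
  by exists e => // h he hlt; apply: Ae => //; exact: ltr0_neq0.
have [e /= e0 He] := (nbhs_ballP _ _).1 fmin.
near=> h; apply: mulr_le0_ge0.
  by rewrite invr_le0 ltW //; near: h; exists 1 => /=.
rewrite subr_ge0 [_%:A]mulr1 /=; apply: He.
  rewrite /ball /= opprD addrCA subrr addr0 normrN.
  by near: h; exists e => //= h; rewrite /ball_ /= sub0r normrN.
by rewrite gtrDr; near: h; exists 1 => /=.
Unshelve. all: by end_near. Qed.

Lemma first_exit (I : finType) (a b : R) (f : I -> R -> R) :
  (forall i, {within `[a, +oo[, continuous (f i)}) -> (forall i, 0 < f i a) ->
  a <= b -> (exists i, f i b <= 0) ->
  exists2 tau, a < tau <= b &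
    [/\ forall j u, a <= u -> u < tau -> 0 < f j u,
        forall j, 0 <= f j tau & exists i, f i tau = 0].
Proof.
move=> cf fa0 ab fb0.
pose Z := [set u | a <= u /\ exists i, f i u <= 0].
have Zb : Z b by [].
have lbZ : lbound Z a by move=> u [].
have infZ : has_inf Z by split; [exists b | exists a].
pose tau := inf Z.
have le_a_tau : a <= tau := lb_le_inf (ex_intro _ b Zb) lbZ.
have pos_before j u : a <= u -> u < tau -> 0 < f j u.
  move=> au; apply: contraTT; rewrite -leNgt => fu0.
  by rewrite -leNgt; apply: (ge_inf infZ.2); split => //; exists j.
have [i fi0] : exists i, f i tau <= 0.
  apply: contrapT => /forallNP fpos.
  have : \forall u \near within `[a, +oo[%classic (nbhs tau), forall j, 0 < f j u.
    apply: filter_forall => j.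
    have := (subspace_continuousP _ _).1 (cf j) tau.
    rewrite /= in_itv /= le_a_tau => /(_ isT) cj.
    apply: (cvgr_gt _ cj).
    by rewrite ltNge; apply/negP => /fpos.
  rewrite near_withinE => /(nbhs_ballP _ _).1 [e /= e0 He].
  have [z Zz ltz] := inf_adherent e0 infZ.
  have tz : tau <= z := ge_inf infZ.2 Zz.
  case: Zz => az [j fj0].
  move: fj0; rewrite leNgt He //; last by rewrite /= in_itv /= az.
  by rewrite /ball /= ler0_norm ?subr_le0 // opprB ltrBlDl.
have lt_a_tau : a < tau.
  rewrite lt_neqAle le_a_tau andbT; apply/eqP => eq_a_tau.
  by move: (fa0 i); rewrite eq_a_tau ltNge fi0.
have nonneg j : 0 <= f j tau.
  have : {for tau, continuous (f j)}.
    by apply: ((continuous_within_itvcyP _ _).1 (cf j)).1; rewrite in_itv /= lt_a_tau.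
  move=> /cvg_at_left_filter cj; rewrite -(cvg_lim _ cj) //.
  apply: limr_ge; first by apply/cvg_ex; exists (f j tau).
  near=> u; apply/ltW/pos_before; last by near: u; exact: nbhs_left_lt.
  by apply/ltW; near: u; exact: nbhs_left_gt.
exists tau; first by rewrite lt_a_tau ge_inf //; exact: infZ.2.
by split => //; exists i; apply/le_anti; rewrite fi0 nonneg.
Unshelve. all: by end_near. Qed.

Lemma is_derive_scaled_expR (e K t1 u : R) :
  is_derive u 1 (fun v => e * expR (K * (v - t1))) (K * (e * expR (K * (u - t1)))).
Proof. by apply: is_derive_eq; rewrite subr0 /GRing.scale /=; ring. Qed.

Lemma nonneg_invariant (I : finType) (t0 : R) (y y' : I -> R -> R) :
  (forall i, {within `[t0, +oo[, continuous (y i)}) ->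
  (forall i t, t0 < t -> is_derive t 1 (y i) (y' i t)) ->
  (forall i, 0 <= y i t0) ->
  (forall i, exists C : R, forall t g : R, t0 < t -> 0 < g <= 1 ->
     (forall j, - g <= y j t) -> y i t = - g -> - (C * g) <= y' i t) ->
  forall i t, t0 <= t -> 0 <= y i t.
Proof.
move=> cy dy y0 /choice[C HC] i t1 t0t1.
pose K := \sum_j `|C j| + 1.
have K0 : 0 <= K by rewrite addr_ge0 // sumr_ge0.
suff perturbed eps : 0 < eps <= 1 -> forall j, 0 < y j t1 + eps.
  apply/ler_addgt0Pr => e e0; have [e1|e1] := leP e 1; first by rewrite ltW ?perturbed ?e0.
  by have := perturbed 1 _ i; rewrite ltr01 lexx => /(_ isT); lra.
move=> /andP[eps0 eps1] j; rewrite ltNge; apply/negP => hj1.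
(* At a first zero of some [h k = y k + p], [y k = - p] forces [h k' >= p > 0],
   whereas [h k] decreases to [0] from the left.  Anchoring [p] at [t1] keeps
   [p <= eps <= 1] on [[t0, t1]]. *)
pose p u := eps * expR (K * (u - t1)).
have p_gt0 u : 0 < p u by rewrite mulr_gt0 ?expR_gt0.
have dp (u : R) : is_derive u 1 p (K * p u) := is_derive_scaled_expR eps K t1 u.
have cp : continuous p.
  by move=> u; apply/differentiable_continuous/derivable1_diffP; case: (dp u).
pose h k := y k + p.
have ch k : {within `[t0, +oo[, continuous (h k)}.
  exact: within_continuousD (cy k) (continuous_subspaceT cp).
have h0 k : 0 < h k t0 by rewrite /h /= ltr_wpDl.
have [|tau /andP[t0tau taut1] [pos nonneg [k hk0]]] := first_exit ch h0 t0t1.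
  by exists j; rewrite /h /p !fctE /= subrr mulr0 expR0 mulr1.
pose g := p tau.
have g1 : g <= 1.
  rewrite /g /p -[1]mulr1 ler_pM ?expR_ge0 ?(ltW eps0) // expR_le1.
  by rewrite mulr_ge0_le0 // subr_le0.
have y'_lb : - (C k * g) <= y' k tau.
  apply: HC => //; first by rewrite p_gt0.
    by move=> l; rewrite -subr_ge0 opprK; exact: nonneg.
  by apply/eqP; rewrite -addr_eq0; apply/eqP; exact: hk0.
have CK : C k <= K - 1.
  by rewrite addrK (le_trans (ler_norm _)) // (bigD1 k) //= lerDl sumr_ge0.
have : y' k tau + K * g <= 0.
  apply: is_derive_le0_left_min (is_deriveD (dy k tau t0tau) (dp tau)) _.
  near=> u; suff : h k tau < h k u by apply: ltW.
  by rewrite hk0 pos //; apply/ltW; near: u; exact: nbhs_left_gt.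
have := p_gt0 tau; rewrite -/g => g0.
have : C k * g <= (K - 1) * g by rewrite ler_pM2r.
lra.
Unshelve. all: by end_near. Qed.

End RealLemmas.

Section ProductBounds.
Variable R : realDomainType.

Lemma mulr_lbound (a b al be a' b' : R) : 0 <= al -> 0 <= be ->
  - al <= a -> - be <= b -> `|a| <= a' -> `|b| <= b' -> - (al * b' + be * a') <= a * b.
Proof.
move=> al0 be0 ha hb; rewrite !ler_norml => /andP[ha1 ha2] /andP[hb1 hb2].
have [a0|a0] := leP 0 a; have [b0|b0] := leP 0 b; nra.
Qed.

Lemma mulr_norm_lbound (c z b : R) : 0 <= c -> `|z| <= b -> - (b * c) <= c * z.
Proof.
by move=> c0 /ler_normlP[zb _]; nra.
Qed.

End ProductBounds.

Section Entries.
Variables (R : realType) (n : nat).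
Implicit Types (M A B dH Hmin : 'M[R]_n) (d o s x r v : 'cV[R]_n).

Lemma mulmx_entry_lbound M x i a : (forall j, 0 <= M i j) ->
  (forall j, a <= x j ord0) -> kvec M i ord0 * a <= (M *m x) i ord0.
Proof.
by move=> M0 xa; rewrite !mxE mulr_suml; apply: ler_sum => j _; rewrite ler_wpM2l.
Qed.

Lemma mulmx_entry_ubound M x i b : (forall j, 0 <= M i j) ->
  (forall j, x j ord0 <= b) -> (M *m x) i ord0 <= kvec M i ord0 * b.
Proof.
by move=> M0 xb; rewrite !mxE mulr_suml; apply: ler_sum => j _; rewrite ler_wpM2l.
Qed.

Lemma mulmx_entry_norm M x i b : (forall j, 0 <= M i j) ->
  (forall j, `|x j ord0| <= b) -> `|(M *m x) i ord0| <= kvec M i ord0 * b.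
Proof.
move=> M0 xb; rewrite ler_norml -mulrN mulmx_entry_lbound ?mulmx_entry_ubound //.
  by move=> j; have /ler_normlP[] := xb j.
by move=> j; rewrite lerNl; have /ler_normlP[] := xb j.
Qed.

Lemma diagc_mulmx d x : diagc d *m x = \col_i (d i ord0 * x i ord0).
Proof. by apply/matrixP => i j; rewrite ord1 /diagc mul_diag_mx !mxE. Qed.

Lemma Hof_mulmx dH Hmin o v i :
  (Hof dH Hmin o *m v) i ord0 = o i ord0 * (dH *m v) i ord0 + (Hmin *m v) i ord0.
Proof. by rewrite /Hof mulmxDl -mulmxA diagc_mulmx [LHS]mxE mxE. Qed.

Lemma rhs_oE A o x i : rhs_o A o x i ord0 =
  (A *m x) i ord0 + (A *m o) i ord0 - 2 * (kvec A i ord0 * o i ord0).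
Proof.
by rewrite /rhs_o /Lap /Ktil !mulmxBr !mulmxBl diagc_mulmx !mxE mulr_natl; ring.
Qed.

Lemma rhs_sE B dH Hmin omega delta o s x r v i :
  rhs_s B dH Hmin omega delta o s x r v i ord0 =
  delta i ord0 * v i ord0 - s i ord0 * ((B *m x) i ord0 + (Hof dH Hmin o *m v) i ord0)
  + omega i ord0 * r i ord0.
Proof. by rewrite /rhs_s !diagc_mulmx !mxE. Qed.

Lemma rhs_xE B gamma s x i : rhs_x B gamma s x i ord0 =
  s i ord0 * (B *m x) i ord0 - gamma i ord0 * x i ord0.
Proof. by rewrite /rhs_x -mulmxA !diagc_mulmx !mxE. Qed.

Lemma rhs_rE dH Hmin gamma omega o x r v i :
  rhs_r dH Hmin gamma omega o x r v i ord0 =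
  gamma i ord0 * x i ord0 - omega i ord0 * r i ord0
  - r i ord0 * (Hof dH Hmin o *m v) i ord0.
Proof. by rewrite /rhs_r -mulmxA !diagc_mulmx !mxE. Qed.

Lemma rhs_vE dH Hmin delta o s r v i :
  rhs_v dH Hmin delta o s r v i ord0 =
  (s i ord0 + r i ord0) * (Hof dH Hmin o *m v) i ord0 - delta i ord0 * v i ord0.
Proof. by rewrite /rhs_v -mulmxA mulmxDl !diagc_mulmx !mxE mulrDl. Qed.

Lemma rhs_sxrv_sum0 B dH Hmin gamma omega delta o s x r v i :
  rhs_s B dH Hmin omega delta o s x r v i ord0 + rhs_x B gamma s x i ord0
  + rhs_r dH Hmin gamma omega o x r v i ord0 + rhs_v dH Hmin delta o s r v i ord0 = 0.
Proof. by rewrite rhs_sE rhs_xE rhs_rE rhs_vE; ring. Qed.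

End Entries.

Section BoundaryEstimates.
Variables (R : realType) (n : nat) (A B Hmin dH : 'M[R]_n) (gamma omega delta : 'cV[R]_n).
Hypotheses (hA : forall i j, 0 <= A i j) (hB : forall i j, 0 <= B i j)
  (hHmin : forall i j, 0 <= Hmin i j) (hdH : forall i j, 0 <= dH i j)
  (hgamma : forall i, 0 <= gamma i ord0) (homega : forall i, 0 <= omega i ord0)
  (hdelta : forall i, 0 <= delta i ord0).
Variables (g : R) (o s x r v : 'cV[R]_n).
Hypotheses (g0 : 0 < g) (g1 : g <= 1)
  (o_ge : forall j, - g <= o j ord0) (o_le : forall j, o j ord0 <= 1 + g)
  (s_ge : forall j, - g <= s j ord0) (x_ge : forall j, - g <= x j ord0)
  (r_ge : forall j, - g <= r j ord0) (v_ge : forall j, - g <= v j ord0)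
  (sum1 : forall j, s j ord0 + x j ord0 + r j ord0 + v j ord0 = 1).

Local Notation k M i := (kvec M i ord0).
Local Notation Hv_max i := (4 * (k dH i * 4) + k Hmin i * 4).
Local Notation Hv_min i := (8 * k dH i + k Hmin i).

Let k_ge0 (M : 'M[R]_n) i : (forall j, 0 <= M i j) -> 0 <= k M i.
Proof. by move=> M0; rewrite mxE sumr_ge0. Qed.

(* The lower bounds and [s + x + r + v = 1] bound every coordinate by [1 + 3 g <= 4]. *)
Let x_le j : x j ord0 <= 1 + 3 * g.
Proof. by move: (sum1 j) (s_ge j) (r_ge j) (v_ge j); lra. Qed.

Let norm_le4 (z : 'cV[R]_n) j : - g <= z j ord0 -> z j ord0 <= 1 + 3 * g -> `|z j ord0| <= 4.
Proof. by move=> zl zu; rewrite ler_norml; apply/andP; split; move: g1; lra. Qed.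

Let o_norm j : `|o j ord0| <= 4.
Proof. by apply: norm_le4 (o_ge j) _; move: (o_le j) g0; lra. Qed.

Let s_norm j : `|s j ord0| <= 4.
Proof. by apply: norm_le4 (s_ge j) _; move: (sum1 j) (x_ge j) (r_ge j) (v_ge j); lra. Qed.

Let x_norm j : `|x j ord0| <= 4.
Proof. exact: norm_le4 (x_ge j) (x_le j). Qed.

Let r_norm j : `|r j ord0| <= 4.
Proof. by apply: norm_le4 (r_ge j) _; move: (sum1 j) (s_ge j) (x_ge j) (v_ge j); lra. Qed.

Let v_norm j : `|v j ord0| <= 4.
Proof. by apply: norm_le4 (v_ge j) _; move: (sum1 j) (s_ge j) (x_ge j) (r_ge j); lra. Qed.

Lemma rhs_o_floor i : o i ord0 = - g -> 0 <= rhs_o A o x i ord0.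
Proof.
rewrite rhs_oE => ->.
have := mulmx_entry_lbound (hA i) x_ge; have := mulmx_entry_lbound (hA i) o_ge.
lra.
Qed.

Lemma rhs_o_ceiling i : o i ord0 = 1 + g -> rhs_o A o x i ord0 <= 2 * k A i * g.
Proof.
rewrite rhs_oE => ->.
have := mulmx_entry_ubound (hA i) x_le; have := mulmx_entry_ubound (hA i) o_le.
lra.
Qed.

Let Hv_norm i : `|(Hof dH Hmin o *m v) i ord0| <= Hv_max i.
Proof.
rewrite Hof_mulmx (le_trans (ler_normD _ _)) // normrM lerD ?mulmx_entry_norm //.
by rewrite ler_pM ?mulmx_entry_norm.
Qed.

Let Hv_lbound i : - (Hv_min i * g) <= (Hof dH Hmin o *m v) i ord0.
Proof.
have dHv : - (k dH i * g) <= (dH *m v) i ord0 by rewrite -mulrN mulmx_entry_lbound.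
have := mulr_lbound (ltW g0) (mulr_ge0 (k_ge0 (hdH i)) (ltW g0)) (o_ge i) dHv
  (o_norm i) (mulmx_entry_norm (hdH i) v_norm).
have := mulmx_entry_lbound (hHmin i) v_ge.
by rewrite Hof_mulmx; lra.
Qed.

Lemma rhs_s_floor i : s i ord0 = - g ->
  - ((delta i ord0 + omega i ord0 + k B i * 4 + Hv_max i) * g)
  <= rhs_s B dH Hmin omega delta o s x r v i ord0.
Proof.
rewrite rhs_sE => ->.
have := ler_wpM2l (hdelta i) (v_ge i); have := ler_wpM2l (homega i) (r_ge i).
have := mulr_norm_lbound (ltW g0) (mulmx_entry_norm (hB i) x_norm).
have := mulr_norm_lbound (ltW g0) (Hv_norm i).
lra.
Qed.

Lemma rhs_x_floor i : x i ord0 = - g ->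
  - (8 * k B i * g) <= rhs_x B gamma s x i ord0.
Proof.
rewrite rhs_xE => ->.
have Bx : - (k B i * g) <= (B *m x) i ord0 by rewrite -mulrN mulmx_entry_lbound.
have := mulr_lbound (ltW g0) (mulr_ge0 (k_ge0 (hB i)) (ltW g0)) (s_ge i) Bx
  (s_norm i) (mulmx_entry_norm (hB i) x_norm).
have := mulr_ge0 (hgamma i) (ltW g0).
lra.
Qed.

Lemma rhs_r_floor i : r i ord0 = - g ->
  - ((gamma i ord0 + Hv_max i) * g)
  <= rhs_r dH Hmin gamma omega o x r v i ord0.
Proof.
rewrite rhs_rE => ->.
have := ler_wpM2l (hgamma i) (x_ge i); have := mulr_ge0 (homega i) (ltW g0).
have := mulr_norm_lbound (ltW g0) (Hv_norm i).
lra.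
Qed.

Lemma rhs_v_floor i : v i ord0 = - g ->
  - ((2 * Hv_max i + Hv_min i * 8) * g)
  <= rhs_v dH Hmin delta o s r v i ord0.
Proof.
rewrite rhs_vE => ->.
have sr : - (2 * g) <= s i ord0 + r i ord0 by move: (s_ge i) (r_ge i); lra.
have sr_norm : `|s i ord0 + r i ord0| <= 8.
  by rewrite (le_trans (ler_normD _ _)) //; move: (s_norm i) (r_norm i); lra.
have Hv_min0 : 0 <= Hv_min i by rewrite addr_ge0 ?mulr_ge0 ?k_ge0.
have := mulr_lbound (mulr_ge0 (ler0n _ 2) (ltW g0)) (mulr_ge0 Hv_min0 (ltW g0))
  sr (Hv_lbound i) sr_norm (Hv_norm i).
have := mulr_ge0 (hdelta i) (ltW g0).
lra.
Qed.

End BoundaryEstimates.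

Inductive coordinate := CO | CO' | CS | CX | CR | CV.

Definition coordinate_to_ord (c : coordinate) : 'I_6 :=
  inord (match c with CO => 0 | CO' => 1 | CS => 2 | CX => 3 | CR => 4 | CV => 5 end).

Definition ord_to_coordinate (k : 'I_6) : coordinate :=
  match nat_of_ord k with 0 => CO | 1 => CO' | 2 => CS | 3 => CX | 4 => CR | _ => CV end.

Lemma coordinate_to_ordK : cancel coordinate_to_ord ord_to_coordinate.
Proof. by case; rewrite /coordinate_to_ord /ord_to_coordinate inordK. Qed.

HB.instance Definition _ := Finite.copy coordinate (can_type coordinate_to_ordK).

Section Trajectory.
Variables (R : realType) (n : nat) (A B Hmin dH : 'M[R]_n) (gamma omega delta : 'cV[R]_n).
Hypotheses (hA : forall i j, 0 <= A i j) (hB : forall i j, 0 <= B i j)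
  (hHmin : forall i j, 0 <= Hmin i j) (hdH : forall i j, 0 <= dH i j)
  (hgamma : forall i, 0 <= gamma i ord0) (homega : forall i, 0 <= omega i ord0)
  (hdelta : forall i, 0 <= delta i ord0).
Variables (t0 : R) (o s x r v : R -> 'cV[R]_n).
Hypotheses
  (co : forall i, cont_from t0 (fun t : R => o t i ord0))
  (cs : forall i, cont_from t0 (fun t : R => s t i ord0))
  (cx : forall i, cont_from t0 (fun t : R => x t i ord0))
  (cr : forall i, cont_from t0 (fun t : R => r t i ord0))
  (cv : forall i, cont_from t0 (fun t : R => v t i ord0))
  (Do : forall t, t0 < t -> forall i,
     is_derive t 1 (fun u => o u i ord0) (rhs_o A (o t) (x t) i ord0))
  (Ds : forall t, t0 < t -> forall i,
     is_derive t 1 (fun u => s u i ord0)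
       (rhs_s B dH Hmin omega delta (o t) (s t) (x t) (r t) (v t) i ord0))
  (Dx : forall t, t0 < t -> forall i,
     is_derive t 1 (fun u => x u i ord0) (rhs_x B gamma (s t) (x t) i ord0))
  (Dr : forall t, t0 < t -> forall i,
     is_derive t 1 (fun u => r u i ord0)
       (rhs_r dH Hmin gamma omega (o t) (x t) (r t) (v t) i ord0))
  (Dv : forall t, t0 < t -> forall i,
     is_derive t 1 (fun u => v u i ord0)
       (rhs_v dH Hmin delta (o t) (s t) (r t) (v t) i ord0))
  (io : forall i, 0 <= o t0 i ord0 <= 1)
  (is0 : forall i, 0 <= s t0 i ord0 <= 1)
  (ix : forall i, 0 <= x t0 i ord0 <= 1)
  (ir : forall i, 0 <= r t0 i ord0 <= 1)
  (iv : forall i, 0 <= v t0 i ord0 <= 1)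
  (isum : forall i, s t0 i ord0 + x t0 i ord0 + r t0 i ord0 + v t0 i ord0 = 1).

Lemma sxrv_sum1 t i : t0 <= t -> s t i ord0 + x t i ord0 + r t i ord0 + v t i ord0 = 1.
Proof.
move=> t0t.
pose q := (fun u => s u i ord0) + (fun u => x u i ord0) + (fun u => r u i ord0)
  + (fun u => v u i ord0).
have dq u : t0 < u -> is_derive u 1 q 0.
  move=> t0u; rewrite -(rhs_sxrv_sum0 B dH Hmin gamma omega delta (o u) (s u) (x u) (r u) (v u) i).
  exact: is_deriveD (is_deriveD (is_deriveD (Ds t0u i) (Dx t0u i)) (Dr t0u i)) (Dv t0u i).
have q'0 u : u \in `]t0, +oo[%R -> q^`() u = 0.
  by rewrite in_itv /= andbT => /dq dqu; rewrite derive1E derive_val.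
have dq1 u : u \in `]t0, +oo[%R -> derivable q u 1.
  by rewrite in_itv /= andbT => /dq [].
have cq : {within `[t0, +oo[, continuous q}.
  by apply/within_continuousD/cv/within_continuousD/cr/within_continuousD; [exact: cs|exact: cx].
rewrite -(isum i); apply/le_anti/andP; split.
  by apply: (ler0_derive1_nincry dq1) => // u /q'0 ->.
by apply: (ger0_derive1_ndecry dq1) => // u /q'0 ->.
Qed.

Definition coord (p : coordinate * 'I_n) t : R :=
  let: (c, i) := p in
  match c with
  | CO => o t i ord0 | CO' => 1 - o t i ord0 | CS => s t i ord0
  | CX => x t i ord0 | CR => r t i ord0 | CV => v t i ord0
  end.

Definition coord_rhs (p : coordinate * 'I_n) t : R :=
  let: (c, i) := p in
  match c with
  | CO => rhs_o A (o t) (x t) i ord0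
  | CO' => - rhs_o A (o t) (x t) i ord0
  | CS => rhs_s B dH Hmin omega delta (o t) (s t) (x t) (r t) (v t) i ord0
  | CX => rhs_x B gamma (s t) (x t) i ord0
  | CR => rhs_r dH Hmin gamma omega (o t) (x t) (r t) (v t) i ord0
  | CV => rhs_v dH Hmin delta (o t) (s t) (r t) (v t) i ord0
  end.

Lemma coord_continuous p : {within `[t0, +oo[, continuous (coord p)}.
Proof.
case: p => -[] i; [exact: co | | exact: cs | exact: cx | exact: cr | exact: cv].
by move=> u; apply: cvgB; [exact: cvg_cst | exact: co].
Qed.

Lemma coord_is_derive p t : t0 < t -> is_derive t 1 (coord p) (coord_rhs p t).
Proof.
move=> t0t; case: p => -[] i; [exact: Do | | exact: Ds | exact: Dx | exact: Dr | exact: Dv].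
by have := is_deriveB (is_derive_cst (1 : R) t 1) (Do t0t i); rewrite sub0r; apply.
Qed.

Lemma coord_t0_ge0 p : 0 <= coord p t0.
Proof.
case: p => -[] i /=; rewrite ?subr_ge0.
- by case/andP: (io i).
- by case/andP: (io i).
- by case/andP: (is0 i).
- by case/andP: (ix i).
- by case/andP: (ir i).
- by case/andP: (iv i).
Qed.

Let state_bounds t g : t0 < t -> (forall q, - g <= coord q t) ->
  [/\ forall j, - g <= o t j ord0, forall j, o t j ord0 <= 1 + g,
      [/\ forall j, - g <= s t j ord0, forall j, - g <= x t j ord0,
           forall j, - g <= r t j ord0 & forall j, - g <= v t j ord0] &
      forall j, s t j ord0 + x t j ord0 + r t j ord0 + v t j ord0 = 1].
Proof.
move=> t0t lb; split.
- by move=> j; exact: (lb (CO, j)).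
- by move=> j; have := lb (CO', j); rewrite /coord; lra.
- by split=> j; [exact: (lb (CS, j)) | exact: (lb (CX, j)) | exact: (lb (CR, j)) | exact: (lb (CV, j))].
- by move=> j; apply/sxrv_sum1/ltW.
Qed.

Lemma coord_rhs_floor p : exists C : R, forall t g : R, t0 < t -> 0 < g <= 1 ->
  (forall q, - g <= coord q t) -> coord p t = - g -> - (C * g) <= coord_rhs p t.
Proof.
case: p => -[] i; [exists 0 | exists (2 * kvec A i ord0) | eexists | eexists | eexists | eexists];
  move=> t g t0t /andP[g0 g1] lb /= e;
  have [lo uo [ls lx lr lv] sum1] := state_bounds t0t lb.
- by rewrite mul0r oppr0; exact (rhs_o_floor hA lo lx e).
- by rewrite lerN2; apply: (rhs_o_ceiling hA uo ls lr lv sum1); lra.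
- exact (rhs_s_floor hB hHmin hdH homega hdelta g0 g1 lo uo ls lx lr lv sum1 e).
- exact (rhs_x_floor hB hgamma g0 g1 ls lx lr lv sum1 e).
- exact (rhs_r_floor hHmin hdH hgamma homega g0 g1 lo uo ls lx lr lv sum1 e).
- exact (rhs_v_floor hHmin hdH hdelta g0 g1 lo uo ls lx lr lv sum1 e).
Qed.

End Trajectory.

Theorem lemma2 (R : realType) (n : nat)
  (A B Hmin dH : 'M[R]_n) (gamma omega delta : 'cV[R]_n)
  (hA : forall i j, 0 <= A i j) (hB : forall i j, 0 <= B i j)
  (hHmin : forall i j, 0 <= Hmin i j) (hdH : forall i j, 0 <= dH i j)
  (hgamma : forall i, 0 <= gamma i ord0) (homega : forall i, 0 <= omega i ord0)
  (hdelta : forall i, 0 <= delta i ord0)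
  (t0 : R) (o s x r v : R -> 'cV[R]_n)
  (* each component is continuous on [t0, +oo) *)
  (co : forall i, cont_from t0 (fun t : R => o t i ord0))
  (cs : forall i, cont_from t0 (fun t : R => s t i ord0))
  (cx : forall i, cont_from t0 (fun t : R => x t i ord0))
  (cr : forall i, cont_from t0 (fun t : R => r t i ord0))
  (cv : forall i, cont_from t0 (fun t : R => v t i ord0))
  (* the dynamics hold for every t > t0 *)
  (Do : forall t, t0 < t -> forall i,
     is_derive t 1 (fun u => o u i ord0) (rhs_o A (o t) (x t) i ord0))
  (Ds : forall t, t0 < t -> forall i,
     is_derive t 1 (fun u => s u i ord0)
       (rhs_s B dH Hmin omega delta (o t) (s t) (x t) (r t) (v t) i ord0))
  (Dx : forall t, t0 < t -> forall i,
     is_derive t 1 (fun u => x u i ord0) (rhs_x B gamma (s t) (x t) i ord0))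
  (Dr : forall t, t0 < t -> forall i,
     is_derive t 1 (fun u => r u i ord0)
       (rhs_r dH Hmin gamma omega (o t) (x t) (r t) (v t) i ord0))
  (Dv : forall t, t0 < t -> forall i,
     is_derive t 1 (fun u => v u i ord0)
       (rhs_v dH Hmin delta (o t) (s t) (r t) (v t) i ord0))
  (* initial conditions *)
  (io : forall i, 0 <= o t0 i ord0 <= 1)
  (is0 : forall i, 0 <= s t0 i ord0 <= 1)
  (ix : forall i, 0 <= x t0 i ord0 <= 1)
  (ir : forall i, 0 <= r t0 i ord0 <= 1)
  (iv : forall i, 0 <= v t0 i ord0 <= 1)
  (isum : forall i, s t0 i ord0 + x t0 i ord0 + r t0 i ord0 + v t0 i ord0 = 1) :
  forall t, t0 < t -> forall i, 0 <= o t i ord0 <= 1.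
Proof.
have coord_ge0 := nonneg_invariant (coord_continuous co cs cx cr cv)
  (coord_is_derive Do Ds Dx Dr Dv) (coord_t0_ge0 io is0 ix ir iv)
  (coord_rhs_floor hA hB hHmin hdH hgamma homega hdelta cs cx cr cv Ds Dx Dr Dv isum).
move=> t t0t i; have := coord_ge0 (CO', i) t (ltW t0t).
by rewrite /= subr_ge0 (coord_ge0 (CO, i) t (ltW t0t)) => ->.
Qed.
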